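(* Let $\mathcal H$ be a Hopf algebra, $\mathcal A\subset\mathcal H$ a left coideal subalgebra and $\mu\in\mathcal A'$ a non-zero multiplicative functional on $\mathcal A$. If $\dim L^{\mathcal A}_\mu>0$ or $\dim R^{\mathcal A}_\mu>0$, then $\dim\mathcal A<\infty$.
   Context: $k$ is a field; $\mathcal H$ is a Hopf algebra over $k$ with comultiplication $\Delta$, counit $\varepsilon$ and invertible antipode $S$. A left coideal subalgebra is a subalgebra $\mathcal A\ni 1$ with $\Delta(\mathcal A)\subset\mathcal H\otimes\mathcal A$. A multiplicative functional is a linear $\mu:\mathcal A\to k$ with $\mu(ab)=\mu(a)\mu(b)$. $L^{\mathcal A}_\mu=\{\Lambda\in\mathcal A: a\Lambda=\mu(a)\Lambda\ \forall a\in\mathcal A\}$ and $R^{\mathcal A}_\mu=\{\Lambda\in\mathcal A:\Lambda a=\mu(a)\Lambda\ \forall a\in\mathcal A\}$. *)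

From HB Require Import structures.
From mathcomp Require Import all_boot all_order all_algebra.
Set Implicit Arguments. Unset Strict Implicit. Unset Printing Implicit Defensive.
Import GRing.Theory.
Local Open Scope ring_scope.

(* Elements of H (x) H, resp. H (x) H (x) H, are represented by finite lists of
   pure tensors.  Two such representatives denote the same tensor iff they agree
   under every product of linear functionals (over a field the maps f (x) g
   separate points of the algebraic tensor product). *)

Section Hopf.
Variables (k : fieldType) (H : algType k).

Definition lin_fun (f : H -> k) : Prop :=
  forall (c : k) (x y : H), f (c *: x + y) = c * f x + f y.

Definition lin_map (f : H -> H) : Prop :=
  forall (c : k) (x y : H), f (c *: x + y) = c *: f x + f y.

Definition teq2 (s t : seq (H * H)) : Prop :=
  forall f g : H -> k, lin_fun f -> lin_fun g ->
    \sum_(p <- s) f p.1 * g p.2 = \sum_(p <- t) f p.1 * g p.2.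

Definition teq3 (s t : seq (H * H * H)) : Prop :=
  forall f g h : H -> k, lin_fun f -> lin_fun g -> lin_fun h ->
    \sum_(p <- s) f p.1.1 * g p.1.2 * h p.2 =
    \sum_(p <- t) f p.1.1 * g p.1.2 * h p.2.

Record hopf_struct := HopfStruct {
  cop : H -> seq (H * H);
  eps : H -> k;
  antipode : H -> H;
  cop_lin : forall (c : k) (x y : H),
    teq2 (cop (c *: x + y)) ([seq (c *: p.1, p.2) | p <- cop x] ++ cop y);
  cop_mul : forall x y : H,
    teq2 (cop (x * y)) [seq (p.1 * q.1, p.2 * q.2) | p <- cop x, q <- cop y];
  cop_one : teq2 (cop 1) [:: (1, 1)];
  coassoc : forall x : H,
    teq3 [seq (q.1, q.2, p.2) | p <- cop x, q <- cop p.1]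
         [seq (p.1, q.1, q.2) | p <- cop x, q <- cop p.2];
  eps_lin : lin_fun eps;
  eps_mul : forall x y : H, eps (x * y) = eps x * eps y;
  eps_one : eps 1 = 1;
  counit_l : forall x : H, \sum_(p <- cop x) eps p.1 *: p.2 = x;
  counit_r : forall x : H, \sum_(p <- cop x) eps p.2 *: p.1 = x;
  antipode_lin : lin_map antipode;
  antipode_l : forall x : H, \sum_(p <- cop x) antipode p.1 * p.2 = eps x *: 1;
  antipode_r : forall x : H, \sum_(p <- cop x) p.1 * antipode p.2 = eps x *: 1;
  antipode_inv : exists S' : H -> H, cancel antipode S' /\ cancel S' antipode
}.

Variable HS : hopf_struct.

Definition left_coideal_subalgebra (A : H -> Prop) : Prop :=
  [/\ A 0, A 1,
      (forall (c : k) x y, A x -> A y -> A (c *: x + y)),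
      (forall x y, A x -> A y -> A (x * y)) &
      (forall a, A a -> exists s : seq (H * H),
          (forall p, p \in s -> A p.2) /\ teq2 (cop HS a) s)].

End Hopf.

Section Sub.
Variables (k : fieldType) (H : algType k).

(* mu : A -> k is linear and multiplicative (mu is given on all of H, only
   its values on A matter). *)
Definition mult_functional (A : H -> Prop) (mu : H -> k) : Prop :=
  (forall (c : k) x y, A x -> A y -> mu (c *: x + y) = c * mu x + mu y) /\
  (forall x y, A x -> A y -> mu (x * y) = mu x * mu y).

Definition nonzero_on (A : H -> Prop) (mu : H -> k) : Prop :=
  exists a, A a /\ mu a <> 0.

Definition L_mu (A : H -> Prop) (mu : H -> k) (L : H) : Prop :=
  A L /\ forall a, A a -> a * L = mu a *: L.

Definition R_mu (A : H -> Prop) (mu : H -> k) (L : H) : Prop :=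
  A L /\ forall a, A a -> L * a = mu a *: L.

Definition pos_dim (S : H -> Prop) : Prop := exists x, S x /\ x <> 0.

Definition fin_dim (A : H -> Prop) : Prop :=
  exists s : seq H, (forall x, x \in s -> A x) /\
    forall a, A a -> exists c : 'I_(size s) -> k,
      a = \sum_(i < size s) c i *: s`_i.
End Sub.

(* Let A be a left coideal subalgebra of a Hopf algebra H and Lam <> 0 an
   element of A with a Lam = mu(a) Lam for all a in A.  For a in A,
     (1 (x) a) Delta(Lam) = sum mu(a_2) (S(a_1) (x) 1) Delta(Lam),
   so the finitely many slices (phi_j (x) id)((1 (x) a) Delta(Lam)) lie in the
   span of the second legs of Delta(Lam); and they vanish only for a = 0, since
   from (1 (x) a) Delta(Lam) = 0 one derives sum mu(a_2) S(a_1) = 0 and then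
   a = 0.  Thus A embeds linearly into a space of coefficient matrices.  A right
   eigenvector of A is a left one in the opposite Hopf algebra H^op, whose
   antipode is S^-1; this needs that S is anti-multiplicative. *)

From Pilot Require Import Defs.
From HB Require Import structures.
From mathcomp Require Import all_boot all_order all_algebra.
From mathcomp Require Import boolp classical_sets zify.
Set Implicit Arguments. Unset Strict Implicit. Unset Printing Implicit Defensive.
Import GRing.Theory.
Local Open Scope ring_scope.

Section Subspace.
Variables (k : fieldType) (V : lmodType k) (W : V -> Prop).

Definition subspace : Prop := W 0 /\ forall c u v, W u -> W v -> W (c *: u + v).

Lemma subspaceD u v : subspace -> W u -> W v -> W (u + v).
Proof. by move=> [_ Wc] Wu Wv; rewrite -[u]scale1r; apply: Wc. Qed.

Lemma subspaceZ c u : subspace -> W u -> W (c *: u).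
Proof. by move=> [W0 Wc] Wu; rewrite -[_ *: _]addr0; apply: Wc. Qed.

Lemma subspaceB u v : subspace -> W u -> W v -> W (u - v).
Proof.
by move=> sW Wu Wv; rewrite -scaleN1r; apply: subspaceD => //; apply: subspaceZ.
Qed.
End Subspace.

(* Linear functionals on H (lin_fun of Defs): there are enough of them to
   separate points and to build biorthogonal systems, which is what makes the
   list representation of tensors usable. *)
Section LinearFunctionals.
Variables (k : fieldType) (H : algType k).
Local Notation lin := (@lin_fun k H).

Lemma lin_fun0 f : lin f -> f 0 = 0.
Proof.
move=> lf; have := lf 1 0 0; rewrite scale1r addr0 mul1r => /esym/eqP.
by rewrite -subr_eq0 addrK => /eqP.
Qed.

Lemma lin_funD f x y : lin f -> f (x + y) = f x + f y.
Proof. by move=> lf; have := lf 1 x y; rewrite scale1r mul1r. Qed.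

Lemma lin_funZ f c x : lin f -> f (c *: x) = c * f x.
Proof. by move=> lf; rewrite -[c *: x]addr0 lf lin_fun0 ?addr0. Qed.

Lemma lin_funB f x y : lin f -> f (x - y) = f x - f y.
Proof. by move=> lf; rewrite lin_funD // -scaleN1r lin_funZ // mulN1r. Qed.

Lemma lin_fun_sum f I (r : seq I) (P : pred I) (F : I -> H) : lin f ->
  f (\sum_(i <- r | P i) F i) = \sum_(i <- r | P i) f (F i).
Proof. by move=> lf; apply: (big_morph f (fun x y => lin_funD x y lf) (lin_fun0 lf)). Qed.

Lemma maximal_avoiding_subspace (K : H -> Prop) x : subspace K -> ~ K x ->
  exists W, [/\ subspace W, (forall z, K z -> W z), ~ W x &
    forall y, ~ W y -> exists c, exists2 w, W w & x = w + c *: y].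
Proof.
move=> [K0 Kc] Kx.
(* The candidates are the M with K \/ M a subspace avoiding x; taking K \/ M
   rather than M makes the union of the empty chain a candidate. *)
pose P M := subspace (fun z => K z \/ M z) /\ ~ M x.
have [M [[[_ KMc] Mx] Mmax]] : exists M, P M /\ forall B, (M `<` B)%classic -> ~ P B.
  apply: Zorn_bigcup => F FP Ftot; split; last first.
    by move=> [X FX Xx]; have [_] := FP X FX; apply.
  split; first by left.
  have lift X u : F X -> K u \/ X u -> K u \/ (\bigcup_(Y in F) Y)%classic u.
    by move=> FX [Ku|Xu]; [left|right; exists X].
  move=> c u v [Ku|[X FX Xu]] [Kv|[Y FY Yv]].
  - by left; apply: Kc.
  - by apply: (lift Y) => //; have [[_ +] _] := FP Y FY; apply; [left|right].
  - by apply: (lift X) => //; have [[_ +] _] := FP X FX; apply; [right|left].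
  - have [XY|YX] := Ftot X Y FX FY.
    + by apply: (lift Y) => //; have [[_ +] _] := FP Y FY; apply; right => //; apply: XY.
    + by apply: (lift X) => //; have [[_ +] _] := FP X FX; apply; right => //; apply: YX.
pose W z := K z \/ M z.
have sW : subspace W by split; [left|].
exists W; split => //; [by left|by case|].
move=> y Wy; pose B z := exists c, exists2 w, W w & z = w + c *: y.
have sB : subspace B.
  split; first by exists 0, 0; rewrite ?scale0r ?addr0 //; left.
  move=> c _ _ [a [w Ww ->]] [b [w' Ww' ->]].
  exists (c * a + b); exists (c *: w + w'); first by case: sW => _; apply.
  by rewrite scalerDr scalerDl scalerA addrACA.
have BW z : W z -> B z by move=> Wz; exists 0, z; rewrite ?scale0r ?addr0.
apply: contrapT => nBx; apply: (Mmax B); last first.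
  split=> //; have -> : (fun z => K z \/ B z) = B.
    apply: funext => z; apply: propext.
    by split=> [[Kz|//]|Bz]; [apply: BW; left|right].
  exact: sB.
split; first by move=> z Mz; apply: BW; right.
move=> /(_ y) MB; apply: Wy; right; apply: MB.
by exists 1, 0; [left|rewrite add0r scale1r].
Qed.

(* A vector x outside a subspace K is separated from K by a linear functional:
   extend K to a maximal subspace W avoiding x, so that H = W + kx. *)
Lemma functional_extension (K : H -> Prop) x : subspace K -> ~ K x ->
  exists f, [/\ lin f, (forall z, K z -> f z = 0) & f x = 1].
Proof.
move=> sK Kx; have [W [sW KW Wx Wmax]] := maximal_avoiding_subspace sK Kx.
have decomp y : exists c, exists2 w, W w & y = w + c *: x.
  have [Wy|/Wmax [c [w Ww xE]]] := pselect (W y).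
    by exists 0, y; rewrite ?scale0r ?addr0.
  have c0 : c != 0 by apply: contraPneq Wx => c0; rewrite xE c0 scale0r addr0.
  exists c^-1, (- (c^-1 *: w)); first by rewrite -scaleNr; apply: subspaceZ.
  by rewrite xE scalerDr scalerA mulVf // scale1r addKr.
have coord_uniq c c' w w' : W w -> W w' -> w + c *: x = w' + c' *: x -> c = c'.
  move=> Ww Ww' E; apply: contrapT => /eqP; rewrite -subr_eq0 => cc.
  apply: Wx; rewrite -[x]scale1r -(mulVf cc) -scalerA.
  have -> : (c - c') *: x = w' - w.
    by apply: (addrI w); rewrite scalerBl addrA E addrK [RHS]addrC subrK.
  by apply: subspaceZ => //; apply: subspaceB.
have [f fP] := choice decomp.
exists f; split.
- move=> c u v; have [w1 Ww1 E1] := fP u; have [w2 Ww2 E2] := fP v.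
  have [w3 Ww3 E3] := fP (c *: u + v).
  apply: (coord_uniq _ _ w3 (c *: w1 + w2)) => //; first by case: sW => _; apply.
  by rewrite -E3 {1}E1 {1}E2 scalerDr scalerDl scalerA addrACA.
- move=> z Kz; have [w Ww E] := fP z.
  by symmetry; apply: (coord_uniq _ _ z w); rewrite ?scale0r ?addr0 -?E //; apply: KW.
- have [w Ww E] := fP x.
  by symmetry; apply: (coord_uniq _ _ 0 w); rewrite ?add0r ?scale1r -?E //; case: sW.
Qed.

Lemma functional_eq x y : (forall f, lin f -> f x = f y) -> x = y.
Proof.
move=> fxy; apply/eqP; rewrite -subr_eq0; apply/eqP; apply: contrapT => xy0.
have [|f [lf _ f1]] := @functional_extension (fun z => z = 0) (x - y) _ xy0.
  by split=> // c _ _ -> ->; rewrite scaler0 addr0.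
by move: f1; rewrite lin_funB // fxy // subrr => /esym/eqP; rewrite oner_eq0.
Qed.

Lemma separating_functional x : x <> 0 -> exists f, lin f /\ f x = 1.
Proof.
move=> x0; have [|f [lf _ f1]] := @functional_extension (fun z => z = 0) x _ x0.
  by split=> // c _ _ -> ->; rewrite scaler0 addr0.
by exists f.
Qed.

Lemma biorthogonal_coord n (e : nat -> H) (phi : nat -> H -> k) (c : nat -> k) i :
  (forall j, lin (phi j)) ->
  (forall i j, (i < n)%N -> (j < n)%N -> phi j (e i) = (i == j)%:R) ->
  (i < n)%N -> phi i (\sum_(j < n) c j *: e j) = c i.
Proof.
move=> lphi dual lt_in; rewrite lin_fun_sum //.
rewrite (bigD1 (Ordinal lt_in)) //= lin_funZ // dual // eqxx mulr1 big1 ?addr0 // => j.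
by rewrite lin_funZ // dual // => /negPf; rewrite -val_eqE /= => ->; rewrite mulr0.
Qed.

(* Extension step for biorthogonal systems: a nonzero vector r killed by the
   coordinate functionals phi_j is not in the span of the e_j, so some
   functional psi vanishes on that span and takes the value 1 at r. *)
Lemma biorthogonal_extend n (e : nat -> H) (phi : nat -> H -> k) r :
  (forall j, lin (phi j)) ->
  (forall i j, (i < n)%N -> (j < n)%N -> phi j (e i) = (i == j)%:R) ->
  (forall j, (j < n)%N -> phi j r = 0) -> r <> 0 ->
  exists psi, [/\ lin psi, psi r = 1, (forall i, (i < n)%N -> psi (e i) = 0) &
    forall c : nat -> k, psi (\sum_(j < n) c j *: e j) = 0].
Proof.
move=> lphi dual phir r0; pose K z := exists c : nat -> k, z = \sum_(j < n) c j *: e j.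
have [||psi [lpsi psiK psir]] := @functional_extension K r.
- split; first by exists (fun _ => 0); rewrite big1 // => j _; rewrite scale0r.
  move=> c _ _ [a ->] [b ->]; exists (fun j => c * a j + b j).
  rewrite scaler_sumr -big_split; apply: eq_bigr => j _.
  by rewrite scalerDl scalerA.
- move=> [c rE]; apply: r0; rewrite rE big1 // => j _.
  by rewrite -(biorthogonal_coord c lphi dual (ltn_ord j)) -rE phir // scale0r.
exists psi; split=> // [i lt_in|c]; apply: psiK; last by exists c.
exists (fun j => (j == i)%:R).
rewrite (bigD1 (Ordinal lt_in)) //= eqxx scale1r big1 ?addr0 // => j.
by move=> /negPf; rewrite -val_eqE /= => ->; rewrite scale0r.
Qed.

(* Every finite family of vectors lies in the range of a finite-rank projection
   x |-> sum_j phi_j x *: e_j attached to a biorthogonal system (e_j, phi_j);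
   the system is built by adding the residual of each new vector. *)
Lemma biorthogonal_system (l : seq H) : exists n (e : nat -> H) (phi : nat -> H -> k),
  [/\ (forall j, lin (phi j)),
      (forall i j, (i < n)%N -> (j < n)%N -> phi j (e i) = (i == j)%:R) &
      (forall x, x \in l -> x = \sum_(j < n) phi j x *: e j)].
Proof.
elim: l => [|x l [n [e [phi [lphi dual span]]]]].
  by exists 0%N, (fun _ => 0), (fun _ _ => 0); split => // _ c u v; rewrite mulr0 addr0.
pose r := x - \sum_(j < n) phi j x *: e j.
have [r0|rn0] := pselect (r = 0).
  exists n, e, phi; split => // z; rewrite inE => /predU1P[->|]; last exact: span.
  by apply/eqP; rewrite -subr_eq0 -/r r0.
have phir j : (j < n)%N -> phi j r = 0.
  by move=> ltj; rewrite lin_funB // (biorthogonal_coord (phi^~ x)) // subrr.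
have [psi [lpsi psir psie psispan]] := biorthogonal_extend lphi dual phir rn0.
exists n.+1, (fun j => if j == n then r else e j),
  (fun j => if j == n then psi else phi j); split.
- by move=> j; case: (j == n).
- move=> i j; rewrite ltnS leq_eqVlt => /predU1P[->|lt_in];
    rewrite ltnS leq_eqVlt => /predU1P[->|lt_jn].
  + by rewrite eqxx.
  + by rewrite (ltn_eqF lt_jn) eqxx phir // (gtn_eqF lt_jn).
  + by rewrite (ltn_eqF lt_in) eqxx psie // ltn_eqF.
  + by rewrite (ltn_eqF lt_in) (ltn_eqF lt_jn) dual.
- move=> z; rewrite big_ord_recr /= eqxx.
  under eq_bigr => j _ do rewrite /= (ltn_eqF (ltn_ord j)).
  rewrite inE => /predU1P[->|zl].
    have -> : psi x = 1.
      rewrite -[x](subrK (\sum_(j < n) phi j x *: e j)) lin_funD //.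
      by rewrite (psispan (phi^~ x)) addr0.
    by rewrite scale1r addrC subrK.
  have -> : psi z = 0 by rewrite (span z zl) (psispan (phi^~ z)).
  by rewrite scale0r addr0 -span.
Qed.

Definition bilinear (B : H -> H -> k) : Prop :=
  (forall v, lin (B ^~ v)) /\ (forall u, lin (B u)).

Definition trilinear (T : H -> H -> H -> k) : Prop :=
  [/\ (forall v w, lin (fun u => T u v w)), (forall u w, lin (fun v => T u v w)) &
      (forall u v, lin (T u v))].

Lemma teq2_contract s t f : teq2 s t -> lin f ->
  \sum_(p <- s) f p.1 *: p.2 = \sum_(p <- t) f p.1 *: p.2.
Proof.
move=> st lf; apply: functional_eq => g lg; rewrite !lin_fun_sum //.
under eq_bigr do rewrite lin_funZ //.
under [RHS]eq_bigr do rewrite lin_funZ //.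
exact: st.
Qed.

(* Equal tensors have the same value under every bilinear form: expanding the
   first factors along a biorthogonal system reduces B to products f (x) g. *)
Lemma teq2_bilinear s t B : teq2 s t -> bilinear B ->
  \sum_(p <- s) B p.1 p.2 = \sum_(p <- t) B p.1 p.2.
Proof.
move=> st [B1 B2].
have [n [e [phi [lphi _ span]]]] := biorthogonal_system (map fst (s ++ t)).
have expand r : {subset map fst r <= map fst (s ++ t)} ->
    \sum_(p <- r) B p.1 p.2 = \sum_(j < n) B (e j) (\sum_(p <- r) phi j p.1 *: p.2).
  move=> sub_r; under [RHS]eq_bigr do rewrite lin_fun_sum //.
  rewrite (exchange_big_dep xpredT) //= big_seq [RHS]big_seq.
  apply: eq_bigr => p pr; rewrite {1}(span p.1 (sub_r _ (map_f fst pr))).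
  rewrite (lin_fun_sum _ _ _ (B1 p.2)); apply: eq_bigr => j _.
  by rewrite (lin_funZ _ _ (B1 p.2)) (lin_funZ _ _ (B2 (e j))).
rewrite !expand => [|z|z]; last 2 first.
- by rewrite map_cat mem_cat => ->; rewrite orbT.
- by rewrite map_cat mem_cat => ->.
by apply: eq_bigr => j _; rewrite (teq2_contract st (lphi j)).
Qed.

Lemma teq3_trilinear s t T : teq3 s t -> trilinear T ->
  \sum_(p <- s) T p.1.1 p.1.2 p.2 = \sum_(p <- t) T p.1.1 p.1.2 p.2.
Proof.
move=> st [T1 T2 T3].
have [n [e [phi [lphi _ span]]]] := biorthogonal_system (map (fun p => p.1.1) (s ++ t)).
have expand r : {subset map (fun p => p.1.1) r <= map (fun p => p.1.1) (s ++ t)} ->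
    \sum_(p <- r) T p.1.1 p.1.2 p.2 =
    \sum_(j < n) \sum_(q <- [seq (phi j p.1.1 *: p.1.2, p.2) | p <- r]) T (e j) q.1 q.2.
  move=> sub_r; under [RHS]eq_bigr do rewrite big_map.
  rewrite (exchange_big_dep xpredT) //= big_seq [RHS]big_seq.
  apply: eq_bigr => p pr; rewrite {1}(span _ (sub_r _ (map_f _ pr))).
  rewrite (lin_fun_sum _ _ _ (T1 _ _)); apply: eq_bigr => j _.
  by rewrite (lin_funZ _ _ (T1 _ _)) (lin_funZ _ _ (T2 _ _)).
rewrite !expand => [|z|z]; last 2 first.
- by rewrite map_cat mem_cat => ->; rewrite orbT.
- by rewrite map_cat mem_cat => ->.
apply: eq_bigr => j _; apply: teq2_bilinear; last by split.
move=> f g lf lg; rewrite !big_map /=.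
under eq_bigr do rewrite lin_funZ //.
under [RHS]eq_bigr do rewrite lin_funZ //.
exact: st.
Qed.
End LinearFunctionals.

(* In a finite-dimensional space every subspace is spanned by finitely many of
   its own vectors: add vectors outside the current span while the dimension grows. *)
Lemma subspace_finite_span (k : fieldType) (V : vectType k) (C : V -> Prop) :
  subspace C ->
  exists s : seq V, (forall x, x \in s -> C x) /\ (forall x, C x -> x \in <<s>>%VS).
Proof.
move=> sC; suff grow d (s : seq V) : (forall x, x \in s -> C x) ->
    (\dim {:V} - \dim <<s>> <= d)%N ->
    exists s : seq V, (forall x, x \in s -> C x) /\ (forall x, C x -> x \in <<s>>%VS).
  exact: (grow _ [::]).
elim: d s => [|d IHd] s Cs le_d.
  exists s; split => // x _; suff -> : <<s>>%VS = fullv by apply: memvf.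
  by apply/eqP; rewrite eqEdim subvf -subn_eq0 -leqn0.
have [spanned|] := pselect (forall x, C x -> x \in <<s>>%VS); first by exists s.
move=> /existsNP [x /not_implyP [Cx x_s]].
apply: (IHd (x :: s)) => [z /predU1P[->|/Cs]//|].
have lt_dim : (\dim <<s>> < \dim <<x :: s>>)%N.
  rewrite span_cons ltnNge; apply/negP => le_dim; apply: x_s.
  have /eqP -> : (<<s>> == <[x]> + <<s>>)%VS by rewrite eqEdim addvSr.
  exact: subvP (addvSl _ _) _ (memv_line x).
have := dimvS (subvf <<x :: s>>); lia.
Qed.

Lemma fin_dim_of_linear_relation (k : fieldType) (H : algType k) (V : vectType k)
    (A : H -> Prop) (T : H -> V -> Prop) :
  subspace A -> T 0 0 ->
  (forall c a b v w, T a v -> T b w -> T (c *: a + b) (c *: v + w)) ->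
  (forall a, A a -> exists v, T a v) -> (forall a, A a -> T a 0 -> a = 0) ->
  fin_dim A.
Proof.
move=> sA T00 Tlin Ttot Tinj.
pose C v := exists a, A a /\ T a v.
have [|s [Cs span_s]] := @subspace_finite_span _ _ C.
  split; first by exists 0; split => //; case: sA.
  move=> c u v [a [Aa Tav]] [b [Ab Tbw]]; exists (c *: a + b).
  by split; [apply: (proj2 sA) | apply: Tlin].
have [w wP] : {w : V -> H & forall v, C v -> A (w v) /\ T (w v) v}.
  apply: (@choice _ _ (fun v a => C v -> A a /\ T a v)) => v.
  by have [[a ha]|nCv] := pselect (C v); [exists a | exists 0].
exists (map w s); split => [_ /mapP[v vs ->]|a Aa]; first by have [] := wP v (Cs v vs).
have [v Tav] := Ttot a Aa.
have vE := @coord_span _ _ _ (in_tuple s) v (span_s v (ex_intro _ a (conj Aa Tav))).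
pose d i := coord (in_tuple s) i v.
rewrite size_map; exists d.
pose b := \sum_(i < size s) d i *: w s`_i.
have wsP (i : 'I_(size s)) : A (w s`_i) /\ T (w s`_i) s`_i.
  by apply: wP; apply: Cs; apply: mem_nth.
have Ab : A b.
  apply: (big_ind A) => [|x y|i _]; [exact: (proj1 sA)|exact: subspaceD|].
  exact: subspaceZ (wsP i).1.
have Tbv : T b v.
  rewrite [v]vE; apply: (big_ind2 T) => // [x x' y y' Txx' Tyy'|i _].
    by rewrite -[x]scale1r -[x']scale1r; apply: Tlin.
  by rewrite -[_ *: w _]addr0 -[_ *: s`_i]addr0; apply: Tlin; [apply: (wsP i).2|].
have: a - b = 0.
  apply: Tinj; first exact: subspaceB.
  by rewrite -(subrr v) -!scaleN1r [a + _]addrC [v + _]addrC; apply: Tlin.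
move/eqP; rewrite subr_eq0 => /eqP ->.
by apply: eq_bigr => i _; rewrite (nth_map 0).
Qed.

Section LinearMaps.
Variables (k : fieldType) (H : algType k).
Local Notation lin := (@lin_fun k H).
Local Notation lmap := (@lin_map k H).

Lemma lin_map0 F : lmap F -> F 0 = 0.
Proof.
move=> lF; have := lF 1 0 0; rewrite !scale1r addr0 => /esym/eqP.
by rewrite -subr_eq0 addrK => /eqP.
Qed.

Lemma lin_mapD F x y : lmap F -> F (x + y) = F x + F y.
Proof. by move=> lF; have := lF 1 x y; rewrite !scale1r. Qed.

Lemma lin_mapZ F c x : lmap F -> F (c *: x) = c *: F x.
Proof. by move=> lF; have := lF c x 0; rewrite !addr0 lin_map0 // addr0. Qed.

Lemma lin_map_sum F I (r : seq I) (G : I -> H) : lmap F ->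
  F (\sum_(i <- r) G i) = \sum_(i <- r) F (G i).
Proof. by move=> lF; apply: (big_morph F (fun x y => lin_mapD x y lF) (lin_map0 lF)). Qed.

Lemma lin_map_inv F G : lmap F -> cancel F G -> cancel G F -> lmap G.
Proof. by move=> lF FK GK c x y; apply: (can_inj FK); rewrite lF !GK. Qed.

Lemma lin_fun_sumF I (r : seq I) (F : I -> H -> k) : (forall i, lin (F i)) ->
  lin (fun x => \sum_(i <- r) F i x).
Proof.
by move=> lF c x y; rewrite mulr_sumr -big_split; apply: eq_bigr => i _; apply: lF.
Qed.

Lemma lin_fun_mulr f c : lin f -> lin (fun x => f x * c).
Proof. by move=> lf a x y; rewrite lf mulrDl mulrA. Qed.

Lemma lin_fun_mull f c : lin f -> lin (fun x => c * f x).
Proof. by move=> lf a x y; rewrite lf mulrDr mulrCA. Qed.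

Lemma lin_fun_comp f G : lin f -> lmap G -> lin (fun x => f (G x)).
Proof. by move=> lf lG a x y; rewrite lG lf. Qed.

Lemma lin_map_id : lmap id.
Proof. by []. Qed.

Lemma lin_map_comp F G : lmap F -> lmap G -> lmap (fun x => F (G x)).
Proof. by move=> lF lG a x y; rewrite lG lF. Qed.

Lemma lin_map_mulr F z : lmap F -> lmap (fun x => F x * z).
Proof. by move=> lF a x y; rewrite lF mulrDl scalerAl. Qed.

Lemma lin_map_mull F z : lmap F -> lmap (fun x => z * F x).
Proof. by move=> lF a x y; rewrite lF mulrDr scalerAr. Qed.
End LinearMaps.

Create HintDb linear.
#[export] Hint Resolve lin_fun_sumF lin_fun_mulr lin_fun_mull lin_fun_comp
  lin_map_id lin_map_comp lin_map_mulr lin_map_mull : linear.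

Ltac linearity :=
  rewrite /bilinear /trilinear; repeat split; intros; eauto 10 with linear.

Lemma antipode_lin_map (k : fieldType) (H : algType k) (HS : hopf_struct H) :
  lin_map (antipode HS).
Proof. exact: antipode_lin. Qed.
#[export] Hint Resolve antipode_lin_map : linear.

Section HopfCalculus.
Variables (k : fieldType) (H : algType k) (HS : hopf_struct H).
Local Notation lin := (@lin_fun k H).
Local Notation cop := (cop HS).
Local Notation eps := (eps HS).
Local Notation S := (antipode HS).

Lemma cop_eval_lin B : bilinear B -> lin (fun x => \sum_(p <- cop x) B p.1 p.2).
Proof.
move=> [B1 B2] c x y; rewrite (teq2_bilinear (cop_lin HS c x y)) //.
rewrite big_cat big_map /= mulr_sumr; congr (_ + _).
by apply: eq_bigr => p _; rewrite (lin_funZ _ _ (B1 p.2)).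
Qed.

Lemma cop_eval_mul B x y : bilinear B ->
  \sum_(p <- cop (x * y)) B p.1 p.2 =
  \sum_(p <- cop x) \sum_(q <- cop y) B (p.1 * q.1) (p.2 * q.2).
Proof. by move=> bB; rewrite (teq2_bilinear (cop_mul HS x y) bB) big_allpairs_dep. Qed.

Lemma coassoc_eval T x : trilinear T ->
  \sum_(p <- cop x) \sum_(q <- cop p.1) T q.1 q.2 p.2 =
  \sum_(p <- cop x) \sum_(q <- cop p.2) T p.1 q.1 q.2.
Proof.
by move=> tT; have := teq3_trilinear (coassoc HS x) tT; rewrite !big_allpairs_dep.
Qed.

Lemma antipode_contract_l x r : \sum_(q <- cop x) S q.1 * (q.2 * r) = eps x *: r.
Proof.
rewrite -[in RHS](mul1r r) scalerAl -antipode_l mulr_suml.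
by apply: eq_bigr => q _; rewrite mulrA.
Qed.

Lemma antipode_contract_r x u : \sum_(q <- cop x) u * q.1 * S q.2 = eps x *: u.
Proof.
rewrite -[in RHS](mulr1 u) scalerAr -antipode_r mulr_sumr.
by apply: eq_bigr => q _; rewrite mulrA.
Qed.

Lemma antipode_twist a y phi g : lin phi -> lin g ->
  \sum_(p <- cop a) \sum_(q <- cop p.2) \sum_(r <- cop y)
     phi (S p.1 * (q.1 * r.1)) * g (q.2 * r.2) =
  \sum_(r <- cop y) phi r.1 * g (a * r.2).
Proof.
move=> lphi lg; rewrite -(@coassoc_eval
  (fun u v w => \sum_(r <- cop y) phi (S u * (v * r.1)) * g (w * r.2))); last by linearity.
transitivity (\sum_(p <- cop a) \sum_(r <- cop y) eps p.1 * phi r.1 * g (p.2 * r.2)).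
  apply: eq_bigr => p _; rewrite exchange_big; apply: eq_bigr => r _ /=.
  by rewrite -mulr_suml -lin_fun_sum // antipode_contract_l lin_funZ.
rewrite exchange_big; apply: eq_bigr => r _ /=.
rewrite -{2}(counit_l HS a) mulr_suml lin_fun_sum // mulr_sumr.
by apply: eq_bigr => p _; rewrite -scalerAl lin_funZ // mulrCA mulrA.
Qed.

Lemma antipode_collapse y u h g : lin h -> lin g ->
  \sum_(r <- cop y) \sum_(q <- cop r.2) h (u * r.1 * S q.1) * g q.2 = h u * g y.
Proof.
move=> lh lg.
rewrite -(@coassoc_eval (fun v w z => h (u * v * S w) * g z)); last by linearity.
under eq_bigr do rewrite -mulr_suml -lin_fun_sum // antipode_contract_r lin_funZ //.
rewrite -{2}(counit_l HS y) lin_fun_sum // mulr_sumr.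
by apply: eq_bigr => r _; rewrite lin_funZ // mulrCA mulrA.
Qed.

Lemma antipode_expand a y h g : lin h -> lin g ->
  h a * g y = \sum_(p <- cop a) \sum_(q <- cop p.1) h q.1 * g (S q.2 * (p.2 * y)).
Proof.
move=> lh lg.
rewrite (@coassoc_eval (fun v w z => h v * g (S w * (z * y)))); last by linearity.
under eq_bigr do rewrite -mulr_sumr -lin_fun_sum // antipode_contract_l lin_funZ //.
rewrite -{1}(counit_r HS a) lin_fun_sum // mulr_suml.
by apply: eq_bigr => p _; rewrite lin_funZ // mulrCA mulrA.
Qed.
End HopfCalculus.

Section LeftEigenvector.
Variables (k : fieldType) (H : algType k) (HS : hopf_struct H).
Local Notation lin := (@lin_fun k H).
Local Notation cop := (cop HS).
Local Notation S := (antipode HS).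
Variables (A : H -> Prop) (mu : H -> k) (Lam : H).
Hypothesis sA : subspace A.
Hypothesis coideal : forall a, A a ->
  exists s : seq (H * H), (forall p, p \in s -> A p.2) /\ teq2 (cop a) s.
Hypothesis LamA : forall a, A a -> a * Lam = mu a *: Lam.
Hypothesis Lam0 : Lam <> 0.

(* The slices (phi (x) id)((1 (x) a) Delta(Lam)) of the left translate of
   Delta(Lam) by a in A lie in the span of the second legs of Delta(Lam):
   (1 (x) a) Delta(Lam) = sum mu(a_2) (S(a_1) (x) 1) Delta(Lam). *)
Lemma translate_slice a sa phi : (forall p, p \in sa -> A p.2) -> teq2 (cop a) sa ->
  lin phi ->
  \sum_(r <- cop Lam) phi r.1 *: (a * r.2) =
  \sum_(r <- cop Lam) (\sum_(p <- sa) mu p.2 * phi (S p.1 * r.1)) *: r.2.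
Proof.
move=> saA ta lphi; apply: functional_eq => g lg; rewrite !lin_fun_sum //.
under eq_bigr do rewrite lin_funZ //.
under [RHS]eq_bigr do rewrite lin_funZ // mulr_suml.
rewrite exchange_big /= -(antipode_twist HS a Lam lphi lg).
pose B u z := \sum_(q <- cop z) \sum_(r <- cop Lam)
  phi (S u * (q.1 * r.1)) * g (q.2 * r.2).
have bB : bilinear B.
  split=> [z|u]; first by linearity.
  apply: (@cop_eval_lin _ _ _ (fun v w => \sum_(r <- cop Lam)
    phi (S u * (v * r.1)) * g (w * r.2))); linearity.
rewrite (teq2_bilinear ta bB); apply: eq_big_seq => p /saA Ap2.
rewrite /B -(@cop_eval_mul _ _ _ (fun v w => phi (S p.1 * v) * g w)); last by linearity.
have lB : bilinear (fun v w => phi (S p.1 * v) * g w) by linearity.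
rewrite LamA // (lin_funZ _ _ (cop_eval_lin HS lB)).
by rewrite mulr_sumr; apply: eq_bigr => r _; rewrite mulrA.
Qed.

(* If the left translate of Delta(Lam) by a vanishes, then so does the tensor
   Z = sum mu(a_2) S(a_1) Lam_1 (x) Lam_2; applying u (x) v |-> u S(v_1) g0(v_2)
   with g0(Lam) = 1 collapses it to sum mu(a_2) S(a_1) = 0. *)
Lemma translate_kernel a sa : (forall p, p \in sa -> A p.2) -> teq2 (cop a) sa ->
  (forall phi, lin phi -> \sum_(r <- cop Lam) phi r.1 *: (a * r.2) = 0) ->
  forall h, lin h -> \sum_(p <- sa) mu p.2 * h (S p.1) = 0.
Proof.
move=> saA ta trans0 h lh; have [g0 [lg0 g0Lam]] := separating_functional Lam0.
pose Z := [seq (mu p.2 *: (S p.1 * r.1), r.2) | p <- sa, r <- cop Lam].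
have Z0 : teq2 Z [::].
  move=> f g lf lg; rewrite big_nil big_allpairs_dep /=.
  have := congr1 g (translate_slice saA ta lf).
  rewrite trans0 // (lin_fun0 lg) lin_fun_sum // => /esym E.
  rewrite -[RHS]E exchange_big /=; apply: eq_bigr => r _.
  by rewrite lin_funZ // mulr_suml; apply: eq_bigr => p _; rewrite lin_funZ // mulrA.
pose B u v := \sum_(q <- cop v) h (u * S q.1) * g0 q.2.
have bB : bilinear B.
  split=> [v|u]; first by linearity.
  by apply: (@cop_eval_lin _ _ _ (fun v w => h (u * S v) * g0 w)); linearity.
have := teq2_bilinear Z0 bB; rewrite big_nil big_allpairs_dep /= => E.
rewrite -[RHS]E.
apply: eq_bigr => p _; rewrite -[h _]mulr1 -g0Lam -(antipode_collapse HS _ _ lh lg0).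
rewrite mulr_sumr; apply: eq_bigr => r _; rewrite /B mulr_sumr.
by apply: eq_bigr => q _; rewrite -scalerAl lin_funZ // mulrA.
Qed.

(* The left translates of Delta(Lam) by elements of A determine them: since
   a (x) Lam = sum mu(a_2) a_1_1 (x) S(a_1_2) Lam, any h(a) is a linear image of
   sum mu(a_2) S(a_1), which vanishes by translate_kernel. *)
Lemma translate_inj a : A a ->
  (forall phi, lin phi -> \sum_(r <- cop Lam) phi r.1 *: (a * r.2) = 0) -> a = 0.
Proof.
move=> Aa trans0; have [sa [saA ta]] := coideal Aa.
have [Si [SK SiK]] := antipode_inv HS.
have [g0 [lg0 g0Lam]] := separating_functional Lam0.
apply: functional_eq => h lh; rewrite (lin_fun0 lh) -[h a]mulr1 -g0Lam.
pose l u := \sum_(q <- cop u) h q.1 * g0 (S q.2 * Lam).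
have ll : lin l.
  by apply: (@cop_eval_lin _ _ _ (fun v w => h v * g0 (S w * Lam))); linearity.
pose B u v := \sum_(q <- cop u) h q.1 * g0 (S q.2 * (v * Lam)).
have bB : bilinear B.
  split=> [v|u]; last by linearity.
  by apply: (@cop_eval_lin _ _ _ (fun w z => h w * g0 (S z * (v * Lam)))); linearity.
rewrite (antipode_expand HS _ _ lh lg0) (teq2_bilinear ta bB).
have lSi := lin_map_inv (antipode_lin HS) SK SiK.
rewrite -[RHS](translate_kernel saA ta trans0 (lin_fun_comp ll lSi)).
apply: eq_big_seq => p /saA Ap2; rewrite SK /B /l LamA // mulr_sumr.
by apply: eq_bigr => q _; rewrite -scalerAr lin_funZ // mulrCA.
Qed.

(* Hence A embeds linearly into a finite-dimensional space of coefficient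
   matrices: each a in A is recorded by the coordinates of finitely many slices
   of its left translate of Delta(Lam). *)
Lemma left_eigenvector_fin_dim : fin_dim A.
Proof.
have [n [e [phi [lphi _ span]]]] := biorthogonal_system (map fst (cop Lam)).
pose m := size (cop Lam); pose leg i := (nth (0, 0) (cop Lam) i).2.
pose slice j a := \sum_(r <- cop Lam) phi j r.1 *: (a * r.2).
pose T a (M : 'M[k]_(n, m)) := forall j : 'I_n, slice j a = \sum_(i < m) M j i *: leg i.
apply: (@fin_dim_of_linear_relation _ _ _ A T sA).
- move=> j; rewrite /slice big1 => [|r _]; last by rewrite mul0r scaler0.
  by rewrite big1 // => i _; rewrite mxE scale0r.
- move=> c a b M N TaM TbN j; rewrite /slice.
  transitivity (c *: slice j a + slice j b).
    rewrite /slice scaler_sumr -big_split; apply: eq_bigr => r _ /=.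
    by rewrite mulrDl scalerDr -scalerAl !scalerA [_ * c]mulrC.
  rewrite TaM TbN scaler_sumr -big_split; apply: eq_bigr => i _ /=.
  by rewrite !mxE scalerDl scalerA.
- move=> a Aa; have [sa [saA ta]] := coideal Aa.
  pose leg1 i := (nth (0, 0) (cop Lam) i).1.
  exists (\matrix_(j, i) \sum_(p <- sa) mu p.2 * phi j (S p.1 * leg1 i)).
  move=> j; rewrite /slice (translate_slice saA ta (lphi j)) (big_nth (0, 0)) big_mkord.
  by apply: eq_bigr => i _; rewrite mxE.
- move=> a Aa Ta0; apply: translate_inj => // f lf.
  transitivity (\sum_(j < n) f (e j) *: slice j a); last first.
    by apply: big1 => j _; rewrite Ta0 big1 ?scaler0 // => i _; rewrite mxE scale0r.
  rewrite /slice; under [RHS]eq_bigr do rewrite scaler_sumr.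
  rewrite exchange_big /= big_seq [RHS]big_seq; apply: eq_bigr => r /(map_f fst) /span r1E.
  rewrite {1}r1E lin_fun_sum // scaler_suml; apply: eq_bigr => j _.
  by rewrite lin_funZ // scalerA mulrC.
Qed.
End LeftEigenvector.

Section AntipodeAntimultiplicative.
Variables (k : fieldType) (H : algType k) (HS : hopf_struct H).
Local Notation lin := (@lin_fun k H).
Local Notation cop := (cop HS).
Local Notation eps := (eps HS).
Local Notation S := (antipode HS).
Let S_lin : lin_map S := antipode_lin HS.

Lemma antipode1 : S 1 = 1.
Proof.
apply: functional_eq => h lh.
have bB : bilinear (fun u v => h (S u * v)) by linearity.
have := teq2_bilinear (cop_one HS) bB; rewrite big_seq1 mulr1 => <-.
by rewrite -lin_fun_sum // antipode_l eps_one scale1r.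
Qed.

Lemma eps_mul_unit a b : (eps a * eps b) *: (1 : H) =
  \sum_(u <- cop a) \sum_(v <- cop b) u.1 * (v.1 * S v.2) * S u.2.
Proof.
transitivity (\sum_(u <- cop a) u.1 * (eps b *: 1) * S u.2); last first.
  by apply: eq_bigr => u _; rewrite -antipode_r mulr_sumr mulr_suml.
under eq_bigr do rewrite -scalerAr -scalerAl mulr1.
by rewrite -scaler_sumr antipode_r scalerA mulrC.
Qed.

(* S(a_1 b_1) a_2 b_2 = eps(a) eps(b) 1, i.e. S o m is a left convolution
   inverse of m on H (x) H. *)
Lemma antipode_mul_contract a b z h : lin h ->
  \sum_(u <- cop a) \sum_(v <- cop b) h (S (u.1 * v.1) * ((u.2 * v.2) * z)) =
  eps a * eps b * h z.
Proof.
move=> lh.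
rewrite -(@cop_eval_mul _ _ HS (fun u v => h (S u * (v * z)))); last by linearity.
by rewrite -lin_fun_sum // antipode_contract_l eps_mul lin_funZ.
Qed.

(* S(xy) = S(x_1 y_1) x_2 y_2 S(y_3) S(x_3): insert
   eps(x_2) eps(y_2) 1 = x_2 y_2 S(y_3) S(x_3) and reassociate by coassociativity. *)
Lemma antipode_mul_expand x y h : lin h ->
  h (S (x * y)) = \sum_(p <- cop x) \sum_(q <- cop y) \sum_(u <- cop p.1)
    \sum_(v <- cop q.1) h (S (u.1 * v.1) * ((u.2 * v.2) * (S q.2 * S p.2))).
Proof.
move=> lh.
transitivity (\sum_(p <- cop x) \sum_(q <- cop y) eps p.2 * eps q.2 * h (S (p.1 * q.1))).
  rewrite -{1}(counit_r HS (x * y)) lin_map_sum ?lin_fun_sum //.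
  under eq_bigr do rewrite lin_mapZ ?lin_funZ //.
  rewrite (@cop_eval_mul _ _ HS (fun u v => eps v * h (S u))); last first.
    by split=> [v|u]; [linearity | apply: lin_fun_mulr (eps_lin HS)].
  by apply: eq_bigr => p _; apply: eq_bigr => q _; rewrite eps_mul.
transitivity (\sum_(p <- cop x) \sum_(u <- cop p.2) \sum_(q <- cop y) \sum_(v <- cop q.2)
    h (S (p.1 * q.1) * (u.1 * (v.1 * S v.2) * S u.2))).
  apply: eq_bigr => p _; rewrite exchange_big; apply: eq_bigr => q _ /=.
  rewrite -lin_funZ // -[_ *: S _]mulr1 -scalerAl scalerAr eps_mul_unit.
  rewrite mulr_sumr lin_fun_sum //.
  by apply: eq_bigr => u _; rewrite mulr_sumr lin_fun_sum.
rewrite -(@coassoc_eval _ _ HS (fun a b c => \sum_(q <- cop y) \sum_(v <- cop q.2)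
    h (S (a * q.1) * (b * (v.1 * S v.2) * S c)))); last by linearity.
apply: eq_bigr => p _; rewrite [RHS](exchange_big_dep xpredT) //=; apply: eq_bigr => u _.
rewrite -(@coassoc_eval _ _ HS (fun a b c => h (S (u.1 * a) * (u.2 * (b * S c) * S p.2))));
  last by linearity.
by apply: eq_bigr => q' _; apply: eq_bigr => v _; rewrite !mulrA.
Qed.

(* The antipode is anti-multiplicative: contract S(x_1 y_1) x_2 y_2 to
   eps(x_1) eps(y_1) in the expansion above. *)
Lemma antipode_antimul x y : S (x * y) = S y * S x.
Proof.
apply: functional_eq => h lh; rewrite antipode_mul_expand //.
transitivity (\sum_(p <- cop x) \sum_(q <- cop y) eps p.1 * eps q.1 * h (S q.2 * S p.2)).
  by apply: eq_bigr => p _; apply: eq_bigr => q _; rewrite antipode_mul_contract.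
rewrite -{2}(counit_l HS x) -{2}(counit_l HS y) !(lin_map_sum _ _ S_lin).
rewrite mulr_sumr lin_fun_sum //; apply: eq_bigr => p _.
rewrite mulr_suml lin_fun_sum //; apply: eq_bigr => q _.
by rewrite !(lin_mapZ _ _ S_lin) -scalerAl -scalerAr !lin_funZ // mulrA [eps q.1 * _]mulrC.
Qed.
End AntipodeAntimultiplicative.

Section OppositeHopfAlgebra.
Variables (k : fieldType) (H : algType k).

HB.instance Definition _ := GRing.Lmodule.on H^c.

Lemma converse_scalerAl (a : k) (u v : H^c) : a *: (u * v) = (a *: u : H^c) * v.
Proof. exact: (scalerAr a (v : H) (u : H)). Qed.
HB.instance Definition _ := GRing.Lmodule_isLalgebra.Build k H^c converse_scalerAl.

Lemma converse_scalerAr (a : k) (u v : H^c) : a *: (u * v) = u * (a *: v : H^c).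
Proof. exact: (scalerAl a (v : H) (u : H)). Qed.
HB.instance Definition _ := GRing.Lalgebra_isAlgebra.Build k H^c converse_scalerAr.

Variables (HS : hopf_struct H) (Si : H -> H).
Hypotheses (SK : cancel (antipode HS) Si) (SiK : cancel Si (antipode HS)).

(* H^op, with the same coproduct and counit, is a Hopf algebra whose antipode is
   the inverse of S; the antipode axioms transfer because S is
   anti-multiplicative and S(1) = 1. *)
Lemma opposite_cop_mul (x y : H^c) : teq2 (cop HS (x * y))
  [seq ((p.1 : H^c) * q.1, (p.2 : H^c) * q.2) | p <- cop HS x, q <- cop HS y].
Proof.
move=> f g lf lg; rewrite (cop_mul HS y x lf lg) !big_allpairs_dep /=.
exact: exchange_big.
Qed.

Lemma opposite_antipode_l (x : H) : \sum_(p <- cop HS x) p.2 * Si p.1 = eps HS x *: 1.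
Proof.
apply: (can_inj SK); rewrite (lin_map_sum _ _ (antipode_lin HS)).
rewrite (lin_mapZ _ _ (antipode_lin HS)) antipode1 -antipode_r.
by apply: eq_bigr => p _; rewrite antipode_antimul SiK.
Qed.

Lemma opposite_antipode_r (x : H) : \sum_(p <- cop HS x) Si p.2 * p.1 = eps HS x *: 1.
Proof.
apply: (can_inj SK); rewrite (lin_map_sum _ _ (antipode_lin HS)).
rewrite (lin_mapZ _ _ (antipode_lin HS)) antipode1 -antipode_l.
by apply: eq_bigr => p _; rewrite antipode_antimul SiK.
Qed.

Definition opposite_hopf : hopf_struct H^c :=
  @HopfStruct k H^c (cop HS) (eps HS) Si (cop_lin HS) opposite_cop_mul (cop_one HS)
    (coassoc HS) (eps_lin HS)
    (fun x y => etrans (eps_mul HS y x) (mulrC _ _)) (eps_one HS)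
    (counit_l HS) (counit_r HS) (lin_map_inv (antipode_lin HS) SK SiK)
    opposite_antipode_l opposite_antipode_r
    (ex_intro _ (antipode HS) (conj SiK SK)).
End OppositeHopfAlgebra.

Theorem mainTheorem8 (k : fieldType) (H : algType k) (HS : hopf_struct H)
  (A : H -> Prop) (mu : H -> k) :
  left_coideal_subalgebra HS A ->
  mult_functional A mu -> nonzero_on A mu ->
  pos_dim (L_mu A mu) \/ pos_dim (R_mu A mu) ->
  fin_dim A.
Proof.
move=> [A0 _ Ac _ coideal] _ _ eigen; have sA : subspace A by [].
case: eigen => [[Lam [[_ LamA] Lam0]] | [Lam [[_ LamA] Lam0]]].
  exact: (left_eigenvector_fin_dim sA coideal LamA Lam0).
(* A right eigenvector of A in H is a left eigenvector of A in H^op. *)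
have [Si [SK SiK]] := antipode_inv HS.
exact: (@left_eigenvector_fin_dim _ _ (opposite_hopf SK SiK) A mu Lam sA coideal LamA Lam0).
Qed.
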